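(* Let $R$ be a commutative ring. The following are equivalent: (1) $R$ is feckly clean; (2) $\operatorname{Max}(R)$ is a strongly zero-dimensional Hausdorff space; (3) $\operatorname{Max}(R)$ is strongly zero-dimensional, and whenever $a,b\in R$ satisfy $a+b=1$ there exist $r,s\in R$ with $(1+ar)(1+bs)\in J(R)$; (4) whenever $a,b\in R$ satisfy $a+b=1$, there exist $r,s,e\in R$ with $1+ar\in eR$, $1+bs\in(1-e)R$ and $e-e^2\in J(R)$.
   Context: Rings have identity; $J(R)$ is the Jacobson radical. An element $u\in R$ is full if $RuR=R$ (for commutative $R$ this means $u$ is a unit). An element $a\in R$ is feckly clean if there exist $e\in R$ and a full element $u\in R$ with $a=e+u$ and $eR(1-e)\subseteq J(R)$; $R$ is feckly clean if every element is feckly clean. $\operatorname{Max}(R)$ is the set of maximal ideals of $R$, topologized so that the closed sets are exactly the sets $V(I)=\{P\in\operatorname{Max}(R): I\subseteq P\}$ for ideals $I$. A topological space $X$ is strongly zero-dimensional if for any two disjoint closed sets $A,B\subseteq X$ there exist disjoint clopen sets $C_1,C_2$ with $A\subseteq C_1$ and $B\subseteq C_2$. *)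

From HB Require Import structures.
From mathcomp Require Import all_boot all_order all_algebra.
Set Implicit Arguments. Unset Strict Implicit. Unset Printing Implicit Defensive.
Import GRing.Theory.
Local Open Scope ring_scope.

Section Defs.
Variable R : comPzRingType.

Definition is_ideal (I : R -> Prop) : Prop :=
  I 0 /\ (forall x y, I x -> I y -> I (x + y)) /\ (forall r x, I x -> I (r * x)).

Definition maximal_ideal (M : R -> Prop) : Prop :=
  is_ideal M /\ ~ M 1 /\
  forall I, is_ideal I -> (forall x, M x -> I x) -> ~ I 1 -> forall x, I x -> M x.

Definition jacobson (x : R) : Prop :=
  forall M, maximal_ideal M -> M x.

(* u is full: the (two-sided) ideal RuR generated by u is all of R, i.e.
   every ideal containing u contains 1. *)
Definition full (u : R) : Prop :=
  forall I, is_ideal I -> I u -> I 1.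

Definition feckly_clean_elt (a : R) : Prop :=
  exists e u, a = e + u /\ full u /\ forall r, jacobson (e * r * (1 - e)).

Definition feckly_clean : Prop := forall a : R, feckly_clean_elt a.

Definition MaxR := { M : R -> Prop | maximal_ideal M }.

Definition Max_closed (A : MaxR -> Prop) : Prop :=
  exists I, is_ideal I /\ forall P : MaxR, A P <-> (forall x, I x -> sval P x).

Definition Max_same (P Q : MaxR) : Prop := forall x, sval P x <-> sval Q x.

End Defs.

Section Topo.
Variables (X : Type) (closed : (X -> Prop) -> Prop).

Definition is_open (U : X -> Prop) : Prop := closed (fun x => ~ U x).
Definition clopen (C : X -> Prop) : Prop := closed C /\ is_open C.

(* [same] is the identity-of-points relation of the space X. *)
Definition hausdorff (same : X -> X -> Prop) : Prop :=
  forall x y : X, ~ same x y ->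
    exists U V, is_open U /\ is_open V /\ U x /\ V y /\ forall z, ~ (U z /\ V z).

Definition strongly_zero_dim : Prop :=
  forall A B, closed A -> closed B -> (forall z, ~ (A z /\ B z)) ->
    exists C1 C2, clopen C1 /\ clopen C2 /\ (forall z, A z -> C1 z) /\
      (forall z, B z -> C2 z) /\ (forall z, ~ (C1 z /\ C2 z)).
End Topo.

From HB Require Import structures.
From mathcomp Require Import all_boot all_order all_algebra.
From mathcomp Require Import ring.
From mathcomp Require classical_sets.
From Stdlib Require Import Classical.
Import GRing.Theory.
Local Open Scope ring_scope.

(* Everything goes through condition (4). If e - e^2 lies in J(R), every
   maximal ideal contains exactly one of e and 1 - e, so V(e) is clopen in
   Max(R); conversely a clopen C = V(I) with complement V(K) has I + K = R, and
   writing 1 = i + k gives C = V(i) with i - i^2 = ik in J(R). Since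
   1 + ar in eR just says that V(a) and V(e) are disjoint, (4) states that
   V(a) and V(b) are separated by a clopen set whenever a + b = 1; applied to
   I + K = R this is strong zero-dimensionality. For (1) <-> (4): a = e + u
   with u a unit gives r = -u^-1, s = u^-1; conversely a - e is a unit modulo
   J(R), hence a unit. Points of Max(R) are closed, so strong
   zero-dimensionality implies Hausdorff. *)

Set Implicit Arguments.
Unset Strict Implicit.

Section MaxSpectrum.
Variable R : comPzRingType.
Implicit Types (I K M : R -> Prop) (a b c e r u x y : R).

Lemma ideal0 I : is_ideal I -> I 0.
Proof. by case. Qed.

Lemma idealD I x y : is_ideal I -> I x -> I y -> I (x + y).
Proof. by case=> _ [H _]; apply: H. Qed.

Lemma idealMl I r x : is_ideal I -> I x -> I (r * x).
Proof. by case=> _ [_ H]; apply: H. Qed.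

Lemma idealMr I r x : is_ideal I -> I x -> I (x * r).
Proof. by move=> HI Ix; rewrite mulrC; apply: idealMl. Qed.

Lemma idealB I x y : is_ideal I -> I x -> I y -> I (x - y).
Proof. by move=> HI Ix Iy; rewrite -mulN1r; apply: idealD => //; apply: idealMl. Qed.

Definition principal a : R -> Prop := fun x => exists r, x = a * r.

Lemma principal_ideal a : is_ideal (principal a).
Proof.
split; first by exists 0; rewrite mulr0.
split=> [x y [r1 ->] [r2 ->] | r x [t ->]]; first by exists (r1 + r2); rewrite mulrDr.
by exists (r * t); ring.
Qed.

Lemma principal_id a : principal a a.
Proof. by exists 1; rewrite mulr1. Qed.

Lemma fullP u : full u <-> exists v, u * v = 1.
Proof.
split=> [Fu | [v uv] I HI Iu]; last by rewrite -uv; apply: idealMr.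
by have [v Hv] := Fu _ (principal_ideal u) (principal_id u); exists v.
Qed.

Definition proper_ideal_over I (X : R -> Prop) := is_ideal X /\ ~ X 1 /\ forall x, I x -> X x.

Lemma chain_union_proper_ideal I (F : (R -> Prop) -> Prop) X0 x0 :
  F X0 -> X0 x0 -> (forall X x, F X -> X x -> proper_ideal_over I X) ->
  (forall X Y, F X -> F Y -> (forall x, X x -> Y x) \/ (forall x, Y x -> X x)) ->
  proper_ideal_over I (fun x => exists2 X, F X & X x).
Proof.
move=> FX0 X0x0 FP Ftot; have [HX0 [_ IX0]] := FP _ _ FX0 X0x0.
split; [split; [|split] | split].
- by exists X0 => //; apply: ideal0.
- move=> x y [X1 FX1 Xx] [X2 FX2 Xy].
  have [[HX1 _] [HX2 _]] := (FP _ _ FX1 Xx, FP _ _ FX2 Xy).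
  case: (Ftot _ _ FX1 FX2) => sub.
  + by exists X2 => //; apply: idealD => //; apply: sub.
  + by exists X1 => //; apply: idealD => //; apply: sub.
- by move=> r x [X FX Xx]; exists X => //; apply: idealMl => //; case: (FP _ _ FX Xx).
- by move=> [X FX X1]; case: (FP _ _ FX X1) => _ [].
- by move=> x Ix; exists X0 => //; apply: IX0.
Qed.

Lemma exists_maximal_ideal I : is_ideal I -> ~ I 1 ->
  exists M, maximal_ideal M /\ forall x, I x -> M x.
Proof.
move=> HI nI1.
(* The empty family must be admissible in [Zorn_bigcup], as its union is empty. *)
pose P X := (forall x, ~ X x) \/ proper_ideal_over I X.
have PI : P I by right.
have [A [[A0 | [HA [nA1 IA]]] Amax]] : exists A, P A /\ forall B, classical_sets.proper A B -> ~ P B.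
- apply: classical_sets.Zorn_bigcup => F FP Ftot.
  case: (classic (exists X, F X /\ exists x, X x)) => [[X0 [FX0 [x0 X0x0]]] | Fempty].
  + right; apply: (chain_union_proper_ideal FX0 X0x0 _ Ftot) => X x FX Xx.
    by case: (FP _ FX) => [Xempty | //]; case: (Xempty x).
  + by left=> x [X FX Xx]; apply: Fempty; exists X; split => //; exists x.
- exfalso; apply: (Amax I) => //; split=> [t At | sub]; first by case: (A0 t).
  by apply: (A0 0); apply: sub; apply: ideal0.
- exists A; split=> //; split=> //; split=> // J HJ AJ nJ1 x Jx.
  apply: NNPP => nAx; apply: (Amax J); first by split=> // sub; apply/nAx/sub.
  by right; split=> //; split=> // y Iy; apply/AJ/IA.
Qed.

Lemma maximal_ideal_ideal M : maximal_ideal M -> is_ideal M.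
Proof. by case. Qed.

Lemma maximal_ideal_proper M : maximal_ideal M -> ~ M 1.
Proof. by case=> _ []. Qed.

Lemma maximal_comaximal M x : maximal_ideal M -> ~ M x ->
  exists m t, M m /\ 1 = m + x * t.
Proof.
move=> [HM [nM1 Mmax]] nMx.
pose I y := exists m t, M m /\ y = m + x * t.
have HI : is_ideal I.
  split; first by exists 0, 0; split; [exact: ideal0 | rewrite mulr0 addr0].
  split=> [y z [m1 [t1 [Mm1 ->]]] [m2 [t2 [Mm2 ->]]] | r y [m [t [Mm ->]]]].
  - by exists (m1 + m2), (t1 + t2); split; [exact: idealD | ring].
  - by exists (r * m), (r * t); split; [exact: idealMl | ring].
apply: NNPP => nI1; apply: nMx; apply: (Mmax I HI).
- by move=> y My; exists y, 0; split => //; rewrite mulr0 addr0.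
- by move=> [m [t [Mm E]]]; apply: nI1; exists m, t.
- by exists 0, 1; split; [exact: ideal0 | rewrite mulr1 add0r].
Qed.

Lemma maximal_prime M x y : maximal_ideal M -> M (x * y) -> M x \/ M y.
Proof.
move=> HM Mxy; case: (classic (M x)) => [|nMx]; [by left | right].
have [m [t [Mm E]]] := maximal_comaximal HM nMx.
have -> : y = m * y + t * (x * y) by rewrite -[y in LHS]mul1r E; ring.
have HMi := maximal_ideal_ideal HM.
by apply: idealD => //; [exact: idealMr | exact: idealMl].
Qed.

Lemma maximal_comaxF M x y : maximal_ideal M -> M x -> M y -> x + y = 1 -> False.
Proof.
move=> HM Mx My xy; apply: (maximal_ideal_proper HM); rewrite -xy.
by apply: idealD => //; exact: maximal_ideal_ideal.
Qed.

Lemma jacobsonMl r x : jacobson x -> jacobson (r * x).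
Proof. by move=> Jx M HM; apply: idealMl; [exact: maximal_ideal_ideal | exact: Jx]. Qed.

Lemma jacobson_unit1D x : jacobson x -> exists v, (1 + x) * v = 1.
Proof.
move=> Jx; apply: NNPP => nunit.
have [|M [HM sM]] := exists_maximal_ideal (principal_ideal (1 + x)).
  by move=> [v E]; apply: nunit; exists v.
apply: (maximal_ideal_proper HM).
have -> : (1 : R) = (1 + x) - x by ring.
apply: idealB; [exact: maximal_ideal_ideal | exact/sM/principal_id | exact: Jx].
Qed.

Lemma comaximal_ideals I K : is_ideal I -> is_ideal K ->
  (forall P : MaxR R, ~ ((forall x, I x -> sval P x) /\ (forall x, K x -> sval P x))) ->
  exists i k, I i /\ K k /\ i + k = 1.
Proof.
move=> HI HK noP.
pose S y := exists i k, I i /\ K k /\ y = i + k.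
have HS : is_ideal S.
  split; first by exists 0, 0; do !split; try exact: ideal0; rewrite addr0.
  split=> [y z [i1 [k1 [Ii1 [Kk1 ->]]]] [i2 [k2 [Ii2 [Kk2 ->]]]]
          | r y [i [k [Ii [Kk ->]]]]].
  - by exists (i1 + i2), (k1 + k2); do !split; try exact: idealD; ring.
  - by exists (r * i), (r * k); do !split; try exact: idealMl; ring.
apply: NNPP => nS1.
have [|M [HM sM]] := exists_maximal_ideal HS.
  by move=> [i [k [Ii [Kk E]]]]; apply: nS1; exists i, k.
apply: (noP (exist _ M HM)); split=> x Jx; apply: sM.
- by exists x, 0; do !split => //; [exact: ideal0 | rewrite addr0].
- by exists 0, x; do !split => //; [exact: ideal0 | rewrite add0r].
Qed.

Definition V a : MaxR R -> Prop := fun P => sval P a.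

Definition idempotent_modJ e := jacobson (e - e ^+ 2).

Lemma idempotent_modJ_compl e : idempotent_modJ e -> idempotent_modJ (1 - e).
Proof. by rewrite /idempotent_modJ; have -> : (1 - e) - (1 - e) ^+ 2 = e - e ^+ 2 by ring. Qed.

Lemma V_closed a : Max_closed (V a).
Proof.
exists (principal a); split=> [|P]; first exact: principal_ideal.
split=> [Pa x [r ->] | sP]; last exact/sP/principal_id.
by apply: idealMr => //; exact: maximal_ideal_ideal (svalP P).
Qed.

Lemma V_complF e P : V e P -> V (1 - e) P -> False.
Proof. by move=> Pe Pe'; apply: (maximal_comaxF (svalP P) Pe Pe'); ring. Qed.

Lemma V_idempotent_cover e P : idempotent_modJ e -> V e P \/ V (1 - e) P.
Proof.
move=> Je; apply: maximal_prime (svalP P) _.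
have -> : e * (1 - e) = e - e ^+ 2 by ring.
exact: Je (svalP P).
Qed.

Lemma V_clopen e : idempotent_modJ e -> clopen (@Max_closed R) (V e).
Proof.
move=> Je; split; first exact: V_closed.
exists (principal (1 - e)); split=> [|P]; first exact: principal_ideal.
split=> [nPe x [r ->] | sP Pe]; last exact/(V_complF Pe)/sP/principal_id.
apply: idealMr; first exact: maximal_ideal_ideal (svalP P).
by case: (V_idempotent_cover P Je).
Qed.

Lemma clopen_V C : clopen (@Max_closed R) C ->
  exists e, idempotent_modJ e /\ forall P, C P <-> V e P.
Proof.
move=> [[I [HI CI]] [K [HK CK]]].
have [|i [k [Ii [Kk ik]]]] := comaximal_ideals HI HK.
  by move=> P [/(CI P).2 CP /(CK P).2].
have CPi P : C P -> V i P by move=> /(CI P).1; apply.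
have nCPk P : ~ C P -> V k P by move=> /(CK P).1; apply.
exists i; split=> [M HM | P].
- have Ek : k = 1 - i by rewrite -ik; ring.
  have -> : i - i ^+ 2 = i * k by rewrite Ek; ring.
  have HMi := maximal_ideal_ideal HM.
  case: (classic (C (exist _ M HM))) => [/CPi | /nCPk] ?.
  + exact: idealMr.
  + exact: idealMl.
- split=> [|Pi]; first exact: CPi.
  by apply: NNPP => /nCPk Pk; apply: (maximal_comaxF (svalP P) Pi Pk).
Qed.

Lemma comaximal_V a c :
  (exists r x, 1 + a * r = c * x) <-> (forall P, ~ (V a P /\ V c P)).
Proof.
split=> [[r [x E]] P [Pa Pc] | noP].
  have HP := svalP P; have HPi := maximal_ideal_ideal HP.
  apply: (maximal_ideal_proper HP).
  have -> : (1 : R) = c * x - a * r by rewrite -E; ring.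
  by apply: idealB => //; apply: idealMr.
have [|_ [_ [[r ->] [[x ->] E]]]] := comaximal_ideals (principal_ideal a) (principal_ideal c).
  by move=> P [Pa Pc]; apply: (noP P); split; [exact/Pa/principal_id | exact/Pc/principal_id].
by exists (- r), x; rewrite -E; ring.
Qed.

Lemma Max_same_sub P Q : (forall x, sval P x -> sval Q x) -> Max_same P Q.
Proof.
move=> PQ x; split=> [|Qx]; first exact: PQ.
have [_ [_ Pmax]] := svalP P.
exact: Pmax _ (maximal_ideal_ideal (svalP Q)) PQ (maximal_ideal_proper (svalP Q)) x Qx.
Qed.

Definition idempotent_separation : Prop :=
  forall a b, a + b = 1 ->
    exists r s e, (exists x, 1 + a * r = e * x) /\
                  (exists y, 1 + b * s = (1 - e) * y) /\ idempotent_modJ e.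

Lemma feckly_clean_separation : feckly_clean R -> idempotent_separation.
Proof.
move=> Rclean a b ab.
have [e [u [Ea [/fullP [v uv] Je]]]] := Rclean a.
have -> : b = 1 - e - u by rewrite -ab Ea; ring.
rewrite Ea.
exists (- v), v, e; split; [|split].
- by exists (- v); rewrite -[X in X + _]uv; ring.
- by exists v; rewrite -[X in X + _]uv; ring.
- by rewrite /idempotent_modJ (_ : e - e ^+ 2 = e * 1 * (1 - e)); last ring.
Qed.

Lemma separation_feckly_clean : idempotent_separation -> feckly_clean R.
Proof.
move=> Rsep a.
have [r [s [e [[x Ex] [[y Ey] Je]]]]] := Rsep a (1 - a) (subrKC a 1).
(* Modulo J(R), s e - r (1 - e) is an inverse of a - e. *)
have Euv : (a - e) * (s * e - r * (1 - e)) =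
    1 + (s + r - x - y) * (e - e ^+ 2) - (1 - e) * (1 + a * r - e * x)
      - e * (1 + (1 - a) * s - (1 - e) * y) by ring.
rewrite Ex Ey !subrr !mulr0 !subr0 in Euv.
have [w Ew] := jacobson_unit1D (jacobsonMl (s + r - x - y) Je).
exists e, (a - e); split; first ring.
split.
- by apply/fullP; exists ((s * e - r * (1 - e)) * w); rewrite mulrA Euv.
- move=> t; have -> : e * t * (1 - e) = t * (e - e ^+ 2) by ring.
  exact: jacobsonMl.
Qed.

Lemma strongly_zero_dim_separation :
  strongly_zero_dim (@Max_closed R) -> idempotent_separation.
Proof.
move=> Rszd a b ab.
have [C1 [C2 [C1clopen [_ [aC1 [bC2 C12]]]]]] :=
  Rszd _ _ (V_closed a) (V_closed b) (fun P '(conj Pa Pb) => maximal_comaxF (svalP P) Pa Pb ab).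
have [f [Jf C1f]] := clopen_V C1clopen.
have [r [x Ex]] : exists r x, 1 + a * r = (1 - f) * x.
  by apply/comaximal_V => P [/aC1/C1f Pf]; apply: V_complF.
have [s [y Ey]] : exists s y, 1 + b * s = (1 - (1 - f)) * y.
  apply/comaximal_V => P [/bC2 C2P]; have -> : 1 - (1 - f) = f by ring.
  by move=> /C1f C1P; apply: (C12 P).
exists r, s, (1 - f); split; [by exists x | split; [by exists y |]].
exact: idempotent_modJ_compl.
Qed.

Lemma separation_strongly_zero_dim :
  idempotent_separation -> strongly_zero_dim (@Max_closed R).
Proof.
move=> Rsep A B [I [HI AI]] [K [HK BK]] AB.
have [|i [k [Ii [Kk ik]]]] := comaximal_ideals HI HK.
  by move=> P [/(AI P).2 AP /(BK P).2 BP]; apply: (AB P).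
have [r [s [e [Eie [Eke Je]]]]] := Rsep i k ik.
have /comaximal_V noPie : exists r x, 1 + i * r = e * x by exists r.
have /comaximal_V noPke : exists s y, 1 + k * s = (1 - e) * y by exists s.
exists (V (1 - e)), (V e); split; [|split; [|split; [|split]]].
- by apply: V_clopen; apply: idempotent_modJ_compl.
- exact: V_clopen.
- move=> P /(AI P).1 /(_ i Ii) Pi.
  by case: (V_idempotent_cover P Je) => // Pe; case: (noPie P).
- move=> P /(BK P).1 /(_ k Kk) Pk.
  by case: (V_idempotent_cover P Je) => // Pe; case: (noPke P).
- by move=> P [Pe' Pe]; apply: (V_complF Pe).
Qed.

Lemma strongly_zero_dim_hausdorff :
  strongly_zero_dim (@Max_closed R) -> hausdorff (@Max_closed R) (@Max_same R).
Proof.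
move=> Rszd P Q nPQ.
pose above (P' Z : MaxR R) := forall x, sval P' x -> sval Z x.
have above_closed P' : Max_closed (above P').
  by exists (sval P'); split=> //; exact: maximal_ideal_ideal (svalP P').
have [|C1 [C2 [[_ C1open] [[_ C2open] [PC1 [QC2 C12]]]]]] :=
  Rszd _ _ (above_closed P) (above_closed Q).
  move=> Z [/Max_same_sub PZ /Max_same_sub QZ]; apply: nPQ => x.
  by have := PZ x; have := QZ x; tauto.
by exists C1, C2; do !split=> //; [apply: PC1 | apply: QC2].
Qed.

Lemma separation_jacobson_product : idempotent_separation ->
  forall a b, a + b = 1 -> exists r s, jacobson ((1 + a * r) * (1 + b * s)).
Proof.
move=> Rsep a b ab.
have [r [s [e [[x Ex] [[y Ey] Je]]]]] := Rsep a b ab.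
exists r, s; rewrite Ex Ey; have -> : e * x * ((1 - e) * y) = (x * y) * (e - e ^+ 2) by ring.
exact: jacobsonMl.
Qed.

End MaxSpectrum.

Theorem theorem5p4 (R : comPzRingType) :
  let C1 := feckly_clean R in
  let C2 := strongly_zero_dim (@Max_closed R) /\ hausdorff (@Max_closed R) (@Max_same R) in
  let C3 := strongly_zero_dim (@Max_closed R) /\
            (forall a b : R, a + b = 1 ->
               exists r s : R, jacobson ((1 + a * r) * (1 + b * s))) in
  let C4 := forall a b : R, a + b = 1 ->
              exists r s e : R,
                (exists x, 1 + a * r = e * x) /\
                (exists y, 1 + b * s = (1 - e) * y) /\
                jacobson (e - e ^+ 2) in
  (C1 <-> C2) /\ (C1 <-> C3) /\ (C1 <-> C4).
Proof.
move=> C1 C2 C3 C4.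
have sep_szd := @separation_strongly_zero_dim R.
have clean_sep := @feckly_clean_separation R.
have szd_clean := fun h => separation_feckly_clean (@strongly_zero_dim_separation R h).
split; [|split]; split.
- by move=> /clean_sep /sep_szd Rszd; split=> //; exact: strongly_zero_dim_hausdorff.
- by case=> /szd_clean.
- by move=> /clean_sep Rsep; split; [exact: sep_szd | exact: separation_jacobson_product].
- by case=> /szd_clean.
- exact: clean_sep.
- exact: separation_feckly_clean.
Qed.
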